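(* Let $r,d\ge 1$, let $G=S_{r,d}$, and let $H=\langle h\rangle$ be a nontrivial cyclic subgroup of $G$. The following are equivalent: (1) $H$ is verbally closed in $G$; (2) $H$ is a retract of $G$; (3) the image of $h$ in $G/G'$ (a free abelian group of rank $r$) is primitive, i.e. it can be included in a basis of $G/G'$.
   Context: $S_{r,d}=F_r/F_r^{(d)}$, the free solvable group of rank $r$ and derived length $d$ ($F_r$ free of rank $r$, $F^{(d)}$ the $d$-th derived subgroup); $G'$ is the derived subgroup. A subgroup $H\le G$ is verbally closed in $G$ if for every group word $w(x_1,\dots,x_n)$ (without constants) and every $h\in H$, if the equation $w(x_1,\dots,x_n)=h$ has a solution in $G$, then it has a solution in $H$. A retract of $G$ is a subgroup $H$ for which there is an endomorphism $\rho:G\to G$ with $\rho(G)\subseteq H$ and $\rho|_H=\mathrm{id}_H$. *)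

(* Free solvable group S_{r,d} = F_r / F_r^{(d)} presented
   concretely: elements are (unreduced) words over the letters x_i^{+-1},
   and two words are equal in S_{r,d} iff  u v^{-1}  lies in F_r^{(d)}. *)
From mathcomp Require Import all_boot all_order all_algebra.
Set Implicit Arguments. Unset Strict Implicit. Unset Printing Implicit Defensive.

(* letter (i, false) = x_i, letter (i, true) = x_i^{-1} *)
Definition letter (n : nat) := ('I_n * bool)%type.
Definition word (n : nat) := seq (letter n).

Definition linv n (a : letter n) : letter n := (a.1, ~~ a.2).
Definition winv n (w : word n) : word n := rev (map (@linv n) w).

Definition wpow n (w : word n) (k : int) : word n :=
  match k with
  | Posz m => flatten (nseq m w)
  | Negz m => flatten (nseq m.+1 (winv w))
  end.

Definition wcomm n (u v : word n) : word n := winv u ++ winv v ++ u ++ v.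

(* Given (the set of words representing) a subgroup P of F_n, the words
   representing [P, P]: generated by commutators, closed under products,
   inverses and free insertion/deletion of a a^{-1}. *)
Inductive comm_closure n (P : word n -> Prop) : word n -> Prop :=
| cc_nil : comm_closure P [::]
| cc_comm u v : P u -> P v -> comm_closure P (wcomm u v)
| cc_cat u v : comm_closure P u -> comm_closure P v -> comm_closure P (u ++ v)
| cc_inv u : comm_closure P u -> comm_closure P (winv u)
| cc_ins u v a : comm_closure P (u ++ v) ->
    comm_closure P (u ++ a :: linv a :: v)
| cc_del u v a : comm_closure P (u ++ a :: linv a :: v) ->
    comm_closure P (u ++ v).

Fixpoint derived n (k : nat) : word n -> Prop :=
  match k with
  | 0 => fun _ => True
  | k'.+1 => comm_closure (@derived n k')
  end.

Definition seq_eq r d (u v : word r) : Prop := derived d (u ++ winv v).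

(* equality in the abelianization G/G' of G = S_{r,d} (d >= 1), i.e. modulo
   G' = F_r' / F_r^{(d)}; since F_r^{(d)} <= F_r', this is equality mod F_r' *)
Definition ab_eq r (u v : word r) : Prop := derived 1 (u ++ winv v).

Definition weval n r (w : word n) (g : 'I_n -> word r) : word r :=
  flatten [seq (if a.2 then winv (g a.1) else g a.1) | a <- w].

Definition verbally_closed_cyclic r d (h : word r) : Prop :=
  forall (n : nat) (w : word n) (k : int),
    (exists g : 'I_n -> word r, seq_eq d (weval w g) (wpow h k)) ->
    exists m : 'I_n -> int, seq_eq d (weval w (fun i => wpow h (m i))) (wpow h k).

Definition is_endo r d (f : word r -> word r) : Prop :=
  (forall u v, seq_eq d u v -> seq_eq d (f u) (f v)) /\
  (forall u v, seq_eq d (f (u ++ v)) (f u ++ f v)).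

Definition retract_cyclic r d (h : word r) : Prop :=
  exists f : word r -> word r, is_endo d f /\
    (forall g, exists k : int, seq_eq d (f g) (wpow h k)) /\
    (forall k : int, seq_eq d (f (wpow h k)) (wpow h k)).

Definition lincomb r (b : 'I_r -> word r) (c : 'I_r -> int) : word r :=
  flatten [seq wpow (b i) (c i) | i <- enum 'I_r].

Definition ab_basis r (b : 'I_r -> word r) : Prop :=
  (forall g : word r, exists c : 'I_r -> int, ab_eq g (lincomb b c)) /\
  (forall c : 'I_r -> int, ab_eq (lincomb b c) [::] -> forall i, c i = 0%R).

Definition ab_primitive r (h : word r) : Prop :=
  exists b : 'I_r -> word r, ab_basis b /\ exists i, ab_eq (b i) h.

From mathcomp Require Import all_boot all_order all_algebra.
From mathcomp Require Import zify.
Set Implicit Arguments. Unset Strict Implicit. Unset Printing Implicit Defensive.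
Import GRing.Theory Num.Theory.
Local Open Scope ring_scope.

(* The bridge between the three conditions is the exponent-sum vector
   exps u : 'rV[int]_r of a word u, i.e. the abelianisation map F_r -> Z^r:
   two words are equal in G/G' iff their exponent sums agree, and every word
   of F_r^{(d)} (d >= 1) has exponent sum 0.  Call a row a of Z^r unimodular
   when some linear form psi : Z^r -> Z takes the value 1 at a.  Then
   - unimodular (exps h) <-> the image of h in G/G' is primitive: by the Smith
     normal form a = g * (first row of an invertible matrix R), and the rows
     of R give a basis of G/G';
   - unimodular (exps h) -> <h> is a retract: u |-> h^(psi (exps u));
   - retract -> verbally closed: apply the retraction to a solution in G;
   - verbally closed -> unimodular: writing exps h = g * exps p, the equation
     y_0^g u(y_1, ..., y_r) = h, where u = p^-g h has exponent sum 0, is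
     solvable in G; a solution in <h> yields h^(g m - 1) = 1 in G, and
     comparing exponent sums forces g m = 1 because h is nontrivial. *)

Section Words.
Variable n : nat.
Implicit Types (a : letter n) (u v w z : word n).

Lemma linvK a : linv (linv a) = a.
Proof. by case: a => i b; rewrite /linv /= negbK. Qed.

Lemma winv_cat u v : winv (u ++ v) = winv v ++ winv u.
Proof. by rewrite /winv map_cat rev_cat. Qed.

Lemma winvK u : winv (winv u) = u.
Proof. by rewrite /winv map_rev revK -map_comp (eq_map linvK) map_id. Qed.

Lemma winv_cons a u : winv (a :: u) = winv u ++ [:: linv a].
Proof. by rewrite -cat1s winv_cat. Qed.

Section CommClosure.
Variable P : word n -> Prop.

Lemma cc_cancel z u v :
  comm_closure P (u ++ z ++ winv z ++ v) <-> comm_closure P (u ++ v).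
Proof.
elim: z u v => [|a z IH] u v //=; rewrite winv_cons -!catA /=.
have := IH (u ++ [:: a]) (linv a :: v); rewrite -!catA /= => IHa.
split=> [/IHa|H]; [exact: cc_del | apply/IHa; exact: cc_ins].
Qed.

Lemma cc_cancel' z u v :
  comm_closure P (u ++ winv z ++ z ++ v) <-> comm_closure P (u ++ v).
Proof. by have := cc_cancel (winv z) u v; rewrite winvK. Qed.

Lemma cc_cancel_at z u v w :
  w = u ++ v -> comm_closure P (u ++ winv z ++ z ++ v) -> comm_closure P w.
Proof. by move=> -> /cc_cancel'. Qed.

Hypothesis P_conj : forall z u, P u -> P (z ++ u ++ winv z).

Lemma cc_conj z u : comm_closure P u -> comm_closure P (z ++ u ++ winv z).
Proof.
elim=> {u}.
- by have := iffRL (cc_cancel z [::] [::]) (cc_nil P); rewrite /= cats0.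
- (* z [u, v] z^-1 is [z u z^-1, z v z^-1] with three pairs z^-1 z deleted *)
  move=> u v Pu Pv; have := cc_comm (P_conj z Pu) (P_conj z Pv).
  rewrite /wcomm !winv_cat !winvK -!catA => H.
  apply: (cc_cancel_at (z := z) (u := z ++ winv u) (v := winv v ++ u ++ v ++ winv z));
    rewrite -!catA //.
  apply: (cc_cancel_at (z := z) (u := z ++ winv u ++ winv z ++ z ++ winv v)
    (v := u ++ v ++ winv z)); rewrite -!catA //.
  apply: (cc_cancel_at (z := z)
    (u := z ++ winv u ++ winv z ++ z ++ winv v ++ winv z ++ z ++ u) (v := v ++ winv z));
    rewrite -!catA //.
- move=> u v _ Hu _ Hv; have := cc_cat Hu Hv; rewrite -!catA => H.
  by apply: (cc_cancel_at (z := z) (u := z ++ u) (v := v ++ winv z)); rewrite -!catA.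
- by move=> u _ /cc_inv; rewrite !winv_cat winvK -!catA.
- move=> u v a _ H; have := cc_ins (u := z ++ u) (v := v ++ winv z) a.
  by rewrite -!catA /=; apply; rewrite -!catA in H.
- move=> u v a _ H; have := cc_del (u := z ++ u) (v := v ++ winv z) (a := a).
  by rewrite -!catA /=; apply; rewrite -!catA in H.
Qed.

End CommClosure.

Section Derived.
Variable d : nat.

Lemma derived_nil : derived d ([::] : word n).
Proof. by case: d => [//|d']; exact: cc_nil. Qed.

Lemma derived_cat u v : derived d u -> derived d v -> derived d (u ++ v).
Proof. by case: d => [//|d']; exact: cc_cat. Qed.

Lemma derived_inv u : derived d u -> derived d (winv u).
Proof. by case: d => [//|d']; exact: cc_inv. Qed.

Lemma derived_cancel z u v :
  derived d (u ++ z ++ winv z ++ v) <-> derived d (u ++ v).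
Proof. by case: d => [//|d']; exact: cc_cancel. Qed.

Lemma derived_cancel' z u v :
  derived d (u ++ winv z ++ z ++ v) <-> derived d (u ++ v).
Proof. by case: d => [//|d']; exact: cc_cancel'. Qed.

End Derived.

Lemma derived_conj d z u : derived d u -> derived d (z ++ u ++ winv z).
Proof.
elim: d z u => [//|d IH] z u /=.
by apply: cc_conj => z' u'; apply: IH.
Qed.

Section SeqEq.
Variable d : nat.

Lemma se_refl u : seq_eq d u u.
Proof. by have := iffRL (derived_cancel d u [::] [::]) (derived_nil d); rewrite cats0. Qed.

Lemma se_sym u v : seq_eq d u v -> seq_eq d v u.
Proof. by rewrite /seq_eq => /derived_inv; rewrite winv_cat winvK. Qed.

Lemma se_trans u v w : seq_eq d u v -> seq_eq d v w -> seq_eq d u w.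
Proof.
rewrite /seq_eq => Huv Hvw; have := derived_cat Huv Hvw.
by rewrite -catA => /derived_cancel'.
Qed.

Lemma se_cat u u' v v' :
  seq_eq d u u' -> seq_eq d v v' -> seq_eq d (u ++ v) (u' ++ v').
Proof.
rewrite /seq_eq winv_cat => Hu Hv; have := derived_cat (derived_conj u Hv) Hu.
have E := derived_cancel' d u (u ++ v ++ winv v') (winv u').
by rewrite -!catA in E *; move/E.
Qed.

Lemma se_inv u v : seq_eq d u v -> seq_eq d (winv u) (winv v).
Proof.
rewrite /seq_eq winvK => /se_sym /(derived_conj (winv u)); rewrite winvK.
have E := derived_cancel' d u (winv u ++ v) [::].
by rewrite -!catA !cats0 in E; rewrite -!catA => /E.
Qed.

Lemma se_cancel u z v : seq_eq d (u ++ z ++ winv z ++ v) (u ++ v).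
Proof.
have := se_refl (u ++ v); rewrite /seq_eq -catA.
by move/(iffRL (derived_cancel d z u _)); rewrite -!catA.
Qed.

Lemma se_cancel' u z v : seq_eq d (u ++ winv z ++ z ++ v) (u ++ v).
Proof. by have := se_cancel u (winv z) v; rewrite winvK. Qed.

Lemma se_nil u : seq_eq d u [::] <-> derived d u.
Proof. by rewrite /seq_eq cats0. Qed.

End SeqEq.
End Words.

Section Powers.
Variables (n d : nat) (h : word n).

Lemma wpow1 : wpow h 1 = h.
Proof. by rewrite /wpow /= cats0. Qed.

Lemma flatten_nseqSr T m (s : seq T) : flatten (nseq m.+1 s) = flatten (nseq m s) ++ s.
Proof. by elim: m => [|m IH] /=; rewrite ?cats0 // -catA -IH. Qed.

Lemma wpow_succ k : seq_eq d (wpow h (k + 1)) (wpow h k ++ h).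
Proof.
case: k => [m|[|m]].
- have -> : Posz m + 1 = Posz m.+1 by lia.
  by rewrite /wpow flatten_nseqSr; exact: se_refl.
- have -> : Negz 0 + 1 = 0 by lia.
  rewrite /wpow /= !cats0; apply: se_sym.
  by have := se_cancel' d [::] h [::]; rewrite /= cats0.
- have -> : Negz m.+1 + 1 = Negz m by lia.
  rewrite /wpow (flatten_nseqSr m.+1) -catA; apply: se_sym.
  by have := se_cancel' d (flatten (nseq m.+1 (winv h))) h [::]; rewrite !cats0.
Qed.

Lemma wpow_pred k : seq_eq d (wpow h (k - 1)) (wpow h k ++ winv h).
Proof.
have := wpow_succ (k - 1); rewrite subrK => Hk.
apply: se_trans (se_sym (se_cat Hk (se_refl d (winv h)))); rewrite -catA.
by have := se_cancel d (wpow h (k - 1)) h [::]; rewrite !cats0 => /se_sym.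
Qed.

Lemma wpow_add a b : seq_eq d (wpow h a ++ wpow h b) (wpow h (a + b)).
Proof.
elim/int_rec: b => [|b IH|b IH].
- by rewrite cats0 addr0; exact: se_refl.
- rewrite intS [1 + _]addrC addrA.
  apply: se_trans (se_cat (se_refl d _) (wpow_succ b)) _.
  rewrite catA; apply: se_trans (se_cat IH (se_refl d h)) _.
  exact: se_sym (wpow_succ _).
- rewrite intS opprD [- 1 + _]addrC addrA.
  apply: se_trans (se_cat (se_refl d _) (wpow_pred (- b%:Z))) _.
  rewrite catA; apply: se_trans (se_cat IH (se_refl d _)) _.
  exact: se_sym (wpow_pred _).
Qed.

Lemma wpow_opp k : seq_eq d (winv (wpow h k)) (wpow h (- k)).
Proof.
have := wpow_add k (- k); rewrite subrr => /(se_cat (se_refl d (winv (wpow h k)))).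
rewrite cats0 => /se_sym H; apply: se_trans H _.
exact: se_cancel' d [::] (wpow h k) (wpow h (- k)).
Qed.

End Powers.

Section Evaluation.
Variables (m n : nat).
Implicit Types (u v w : word m) (g : 'I_m -> word n).

Lemma weval_cat u v g : weval (u ++ v) g = weval u g ++ weval v g.
Proof. by rewrite /weval map_cat flatten_cat. Qed.

Lemma weval_cons (a : letter m) u g :
  weval (a :: u) g = (if a.2 then winv (g a.1) else g a.1) ++ weval u g.
Proof. by []. Qed.

Lemma weval_winv w g : weval (winv w) g = winv (weval w g).
Proof.
elim: w => [//|a w IH].
rewrite winv_cons weval_cat IH weval_cons winv_cat; congr (_ ++ _).
by rewrite /weval /= cats0; case: a => i [] /=; rewrite ?winvK.
Qed.

Lemma weval_wpow w k g : weval (wpow w k) g = wpow (weval w g) k.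
Proof.
have weval_nseq j u : weval (flatten (nseq j u)) g = flatten (nseq j (weval u g)).
  by elim: j => [//|j IH] /=; rewrite weval_cat IH.
by case: k => k; rewrite /wpow weval_nseq ?weval_winv.
Qed.

Lemma weval_cong d w g g' :
  (forall i, seq_eq d (g i) (g' i)) -> seq_eq d (weval w g) (weval w g').
Proof.
move=> Hg; elim: w => [|a w IH]; first exact: se_refl.
rewrite !weval_cons; apply: se_cat IH.
by case: a.2; [apply: se_inv|]; apply: Hg.
Qed.

Definition sgl (a : letter m) : int := if a.2 then -1 else 1.

Lemma weval_pow d w (h : word n) (k : 'I_m -> int) :
  seq_eq d (weval w (fun i => wpow h (k i))) (wpow h (\sum_(a <- w) sgl a * k a.1)).
Proof.
elim: w => [|a w IH]; first by rewrite big_nil; exact: se_refl.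
rewrite weval_cons big_cons.
apply: se_trans (se_cat (se_refl d _) IH) _; apply: se_trans (wpow_add _ _ _ _).
apply: se_cat (se_refl _ _); rewrite /sgl; case: a.2.
- by rewrite mulN1r; exact: wpow_opp.
- by rewrite mul1r; exact: se_refl.
Qed.

End Evaluation.

Section ExponentSum.
Variable n : nat.
Implicit Types (a : letter n) (u v w : word n).

Definition el a : 'rV[int]_n := sgl a *: delta_mx 0 a.1.
Definition exps u : 'rV[int]_n := \sum_(a <- u) el a.

Lemma exps_cat u v : exps (u ++ v) = exps u + exps v.
Proof. by rewrite /exps big_cat. Qed.

Lemma exps_cons a u : exps (a :: u) = el a + exps u.
Proof. by rewrite /exps big_cons. Qed.

Lemma el_linv a : el (linv a) = - el a.
Proof. by case: a => i []; rewrite /el /sgl /= ?scaleNr ?opprK. Qed.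

Lemma exps_winv u : exps (winv u) = - exps u.
Proof.
elim: u => [|a u IH]; first by rewrite /exps big_nil oppr0.
by rewrite winv_cons exps_cat IH !exps_cons el_linv /exps big_nil addr0 opprD addrC.
Qed.

Lemma exps_wpow u k : exps (wpow u k) = k *: exps u.
Proof.
have exps_nseq j v : exps (flatten (nseq j v)) = exps v *+ j.
  elim: j => [|j IH]; first by rewrite /exps big_nil mulr0n.
  by rewrite /= exps_cat IH mulrS.
case: k => j; rewrite /wpow exps_nseq; first by rewrite -natz scaler_nat.
by rewrite exps_winv NegzE scaleNr -natz scaler_nat mulNrn.
Qed.

Lemma exps_letter (i : 'I_n) : exps [:: (i, false)] = delta_mx 0 i.
Proof. by rewrite /exps big_seq1 /el /sgl /= scale1r. Qed.

Lemma cc_exps (P : word n -> Prop) u : comm_closure P u -> exps u = 0.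
Proof.
elim=> {u}.
- by rewrite /exps big_nil.
- move=> u v _ _; rewrite /wcomm !exps_cat !exps_winv.
  by rewrite (addrCA (- exps v)) addKr addNr.
- by move=> u v _ Hu _ Hv; rewrite exps_cat Hu Hv addr0.
- by move=> u _ Hu; rewrite exps_winv Hu oppr0.
- by move=> u v a _; rewrite !exps_cat !exps_cons el_linv addNKr.
- by move=> u v a _; rewrite !exps_cat !exps_cons el_linv addNKr.
Qed.

Lemma se_exps d u v : seq_eq d.+1 u v -> exps u = exps v.
Proof. by move/cc_exps/eqP; rewrite exps_cat exps_winv subr_eq0 => /eqP. Qed.

Lemma exps_coord u j : exps u 0 j = \sum_(a <- u) sgl a * (a.1 == j)%:R.
Proof.
rewrite /exps summxE; apply: eq_bigr => a _.
by rewrite !mxE eqxx /= eq_sym.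
Qed.

Lemma pair_exps u (c : 'I_n -> int) :
  \sum_(a <- u) sgl a * c a.1 = \sum_j exps u 0 j * c j.
Proof.
apply/esym; under eq_bigr => j _ do rewrite exps_coord big_distrl /=.
rewrite exchange_big /=; apply: eq_bigr => a _.
rewrite (bigD1 a.1) //= eqxx mulr1 big1 ?addr0 // => j.
by rewrite eq_sym => /negbTE ->; rewrite mulr0 mul0r.
Qed.

Lemma exps_nolinv a u : linv a \notin u ->
  exps u 0 a.1 = sgl a * (count (fun b : letter n => b.1 == a.1) u)%:R.
Proof.
elim: u => [|b u IH]; first by rewrite /exps big_nil mxE mulr0.
rewrite in_cons negb_or => /andP [nb nu].
rewrite exps_cons mxE IH // /el !mxE eqxx /= eq_sym.
case: eqP => [E|_]; last by rewrite mulr0 add0r add0n.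
have -> : sgl b = sgl a.
  clear IH nu; move: nb; case: b E => i bb /= ->; case: a => j aa.
  by case: aa; case: bb; rewrite /linv /= ?eqxx.
by rewrite natrD mulrDr mulr1.
Qed.

Lemma exps0_linv a u : exps (a :: u) = 0 -> linv a \in u.
Proof.
apply: contraPT => nu /matrixP /(_ 0 a.1).
rewrite exps_cons mxE exps_nolinv // /el !mxE !eqxx -mulrDr -natrD => /eqP.
by rewrite mulf_eq0 pnatr_eq0 /= orbF /sgl; case: a.2.
Qed.

Lemma exps0_derived1 u : exps u = 0 -> derived 1 u.
Proof.
have [N] := ubnP (size u); elim: N u => // N IH [_ _|a u]; first exact: cc_nil.
move=> Hsize Hu; have Hin := exps0_linv Hu.
case/splitPr: Hin Hsize Hu => v w Hsize Hu.
have Hvw : derived 1 (v ++ w).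
  apply: IH; first by move: Hsize; rewrite /= !size_cat /=; lia.
  by move: Hu; rewrite exps_cons !exps_cat exps_cons el_linv addrCA addNKr.
(* a v a^-1 w = [a^-1, v^-1] v w, up to the cancellation v^-1 v *)
have Hc : derived 1 (wcomm [:: linv a] (winv v)) by apply: cc_comm.
have Ea : winv [:: linv a] = [:: a] by rewrite /winv /= linvK.
rewrite /wcomm winvK Ea in Hc.
have E := derived_cancel' 1 v (a :: v ++ [:: linv a]) w.
by have := derived_cat Hc Hvw; rewrite /= -!catA /= in E *; move/E.
Qed.

Lemma ab_eqP u v : ab_eq u v <-> exps u = exps v.
Proof.
split; first exact: (@se_exps 0).
by move=> E; apply: exps0_derived1; rewrite exps_cat exps_winv E subrr.
Qed.

End ExponentSum.

Definition unimodular n (a : 'rV[int]_n) : Prop :=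
  exists psi : 'I_n -> int, \sum_j a 0 j * psi j = 1.

Lemma smith_row n (a : 'rV[int]_n.+1) :
  exists g : int, exists2 R : 'M[int]_n.+1, R \in unitmx & a = g *: row 0 R.
Proof.
have [L uL [R uR [s _ E]]] := int_Smith_normal_form a.
exists (L 0 0 * s`_0), R => //.
rewrite E rowE scalemxAl; congr (_ *m _).
apply/matrixP => i j; rewrite !mxE big_ord1 !ord1 !mxE /= eq_sym.
by rewrite mulr_natr -mulrnAr.
Qed.

Lemma unimodular_scale_row n (g : int) (R : 'M[int]_n.+1) : R \in unitmx ->
  unimodular (g *: row 0 R) <-> g \is a GRing.unit.
Proof.
move=> uR; split=> [[psi Hpsi]|ug].
- apply/unitrP; exists (\sum_j R 0 j * psi j).
  suff Hg : g * (\sum_j R 0 j * psi j) = 1 by rewrite mulrC Hg.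
  rewrite -Hpsi big_distrr; apply: eq_bigr => j _; rewrite !mxE; exact: mulrA.
- exists (fun j => g^-1 * invmx R j 0).
  have : (R *m invmx R) 0 0 = 1 by rewrite mulmxV // mxE.
  rewrite mxE => <-; apply: eq_bigr => j _.
  by rewrite !mxE mulrCA !mulrA mulVr // mul1r.
Qed.

Lemma scale_row_eq0 n (c : int) (R : 'M[int]_n.+1) :
  R \in unitmx -> c *: row 0 R = 0 -> c = 0.
Proof.
move=> uR /(congr1 (fun M => (M *m invmx R) 0 0)).
by rewrite -scalemxAl -row_mul mulmxV // mul0mx !mxE eqxx mulr1.
Qed.

Definition vword n (v : 'rV[int]_n) : word n :=
  lincomb (fun i => [:: (i, false)]) (fun i => v 0 i).

Lemma exps_lincomb n (b : 'I_n -> word n) (c : 'I_n -> int) :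
  exps (lincomb b c) = \sum_i c i *: exps (b i).
Proof.
have exps_flatten (s : seq (word n)) : exps (flatten s) = \sum_(x <- s) exps x.
  by elim: s => [|x s IH]; rewrite ?big_nil /exps ?big_nil // big_cons -IH -exps_cat.
by rewrite exps_flatten big_map big_enum; apply: eq_bigr => i _; rewrite exps_wpow.
Qed.

Lemma exps_vword n (v : 'rV[int]_n) : exps (vword v) = v.
Proof.
rewrite exps_lincomb [RHS]row_sum_delta.
by apply: eq_bigr => i _; rewrite exps_letter.
Qed.

Lemma exps_rows_lincomb n (R : 'M[int]_n) (c : 'I_n -> int) :
  exps (lincomb (fun k => vword (row k R)) c) = (\row_k c k) *m R.
Proof.
rewrite exps_lincomb mulmx_sum_row.
by apply: eq_bigr => k _; rewrite exps_vword mxE.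
Qed.

Lemma unitmx_ab_basis n (R : 'M[int]_n) :
  R \in unitmx -> ab_basis (fun k => vword (row k R)).
Proof.
move=> uR; split.
- move=> g; exists (fun k => (exps g *m invmx R) 0 k); apply/ab_eqP.
  rewrite exps_rows_lincomb.
  have -> : \row_k (exps g *m invmx R) 0 k = exps g *m invmx R.
    by apply/matrixP => i j; rewrite !ord1 mxE.
  by rewrite mulmxKV.
- move=> c /ab_eqP; rewrite exps_rows_lincomb /exps big_nil => Hc i.
  have := congr1 (fun M => (M *m invmx R) 0 i) Hc.
  by rewrite /= mulmxK // mul0mx !mxE.
Qed.

Lemma unimodular_primitive n (h : word n.+1) :
  unimodular (exps h) -> ab_primitive h.
Proof.
have [g [R uR Eh]] := smith_row (exps h).
rewrite Eh (unimodular_scale_row _ uR) => ug.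
exists (fun k => vword (row k (g *: R))); split.
  by apply: unitmx_ab_basis; rewrite unitmxZ.
by exists 0; apply/ab_eqP; rewrite exps_vword Eh; apply/matrixP => i j; rewrite !mxE.
Qed.

Lemma primitive_unimodular n (h : word n) : ab_primitive h -> unimodular (exps h).
Proof.
move=> [b [[span _] [i Ei]]].
pose B : 'M[int]_n := \matrix_(k, j) exps (b k) 0 j.
have /fin_all_exists [C HC] :
  forall j : 'I_n, exists c : 'I_n -> int, ab_eq [:: (j, false)] (lincomb b c).
  by move=> j; apply: span.
(* the coordinate matrix C of the generators is a left, hence a right,
   inverse of the matrix B of the basis *)
pose Cm : 'M[int]_n := \matrix_(j, k) C j k.
have CB : Cm *m B = 1%:M.
  apply/row_matrixP => j; rewrite row_mul row1 -exps_letter (iffLR (ab_eqP _ _) (HC j)).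
  rewrite exps_lincomb mulmx_sum_row; apply: eq_bigr => k _.
  by congr (_ *: _); [rewrite !mxE | apply/matrixP => x y; rewrite !mxE ord1].
exists (fun j => Cm j i).
have : (B *m Cm) i i = 1 by rewrite (mulmx1C CB) mxE eqxx.
rewrite mxE => <-; apply: eq_bigr => j _.
by rewrite mxE -(iffLR (ab_eqP _ _) Ei) mxE.
Qed.

Lemma endo_weval r d (f : word r -> word r) : is_endo d f ->
  forall m (w : word m) (g : 'I_m -> word r),
  seq_eq d (f (weval w g)) (weval w (fun i => f (g i))).
Proof.
move=> [f_cong f_cat].
have f_nil : seq_eq d (f [::]) [::].
  (* f 1 = f 1 f 1, so f 1 = 1 after cancelling f 1 *)
  set e := f [::]; have ee : seq_eq d e (e ++ e) := f_cat [::] [::].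
  apply: se_trans (se_sym (se_cancel' d [::] e e)) _.
  apply: se_trans (se_cat (se_refl d (winv e)) (se_sym ee)) _.
  by have := se_cancel' d [::] e [::]; rewrite /= cats0.
have f_inv u : seq_eq d (f (winv u)) (winv (f u)).
  have Hu : seq_eq d (f (winv u) ++ f u) [::].
    apply: se_trans (se_sym (f_cat _ _)) (se_trans _ f_nil); apply: f_cong.
    by have := se_cancel' d [::] u [::]; rewrite /= cats0.
  have := se_cancel d (f (winv u)) (f u) [::]; rewrite !cats0 => /se_sym Hc.
  by apply: se_trans Hc _; rewrite catA; apply: se_cat Hu (se_refl d _).
move=> m; elim=> [|a w IH] g; first exact: f_nil.
rewrite !weval_cons; apply: se_trans (f_cat _ _) _; apply: se_cat (IH g).
by case: a.2; [exact: f_inv | exact: se_refl].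
Qed.

(* retract => verbally closed: a retraction maps a solution in G to one in H *)
Lemma retract_verbally_closed r d (h : word r) :
  retract_cyclic d h -> verbally_closed_cyclic d h.
Proof.
move=> [f [f_endo [f_img f_id]]] m w k [g Hg].
have /fin_all_exists [e He] : forall i, exists e : int, seq_eq d (f (g i)) (wpow h e).
  by move=> i; apply: f_img.
exists e; apply: se_trans (weval_cong w (fun i => se_sym (He i))) _.
apply: se_trans (se_sym (endo_weval f_endo w g)) _.
by apply: se_trans (f_id k); apply: f_endo.1.
Qed.

(* unimodular => retract: if psi (exps h) = 1, then u |-> h^(psi (exps u)) *)
Lemma unimodular_retract r d (h : word r) :
  unimodular (exps h) -> retract_cyclic d.+1 h.
Proof.
move=> [psi Hpsi].
pose s (u : word r) := \sum_j exps u 0 j * psi j.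
have sD u v : s (u ++ v) = s u + s v.
  by rewrite /s -big_split; apply: eq_bigr => j _; rewrite exps_cat mxE mulrDl.
have s_h k : s (wpow h k) = k.
  rewrite /s -[RHS]mulr1 -Hpsi big_distrr; apply: eq_bigr => j _.
  by rewrite exps_wpow mxE /= mulrA.
exists (fun u => wpow h (s u)); split; [split|split].
- by move=> u v /se_exps Euv; rewrite /s Euv; exact: se_refl.
- by move=> u v; rewrite sD; exact: se_sym (wpow_add _ _ _ _).
- by move=> g; exists (s g); exact: se_refl.
- by move=> k; rewrite s_h; exact: se_refl.
Qed.

(* Ingredients of the auxiliary equation y_0^g u(y_1, ..., y_r) = h: letters
   of F_r are shifted to y_1, ..., y_r, and y_0 is assigned the word p. *)
Definition shl r (a : letter r) : letter r.+1 := (lift ord0 a.1, a.2).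

Definition gsol r (p : word r) (i : 'I_r.+1) : word r :=
  if unlift ord0 i is Some j then [:: (j, false)] else p.

Lemma weval_shl r (p u : word r) : weval (map (@shl r) u) (gsol p) = u.
Proof.
elim: u => [//|a u IH]; rewrite map_cons weval_cons IH.
by rewrite /shl /gsol /= liftK; case: a => j [].
Qed.

Lemma verbally_closed_exponent r d (h p : word r) (g : int) :
  verbally_closed_cyclic d h -> exps h = g *: exps p ->
  exists m : int, derived d (wpow h (g * m - 1)).
Proof.
move=> VC Eh.
pose u : word r := winv (wpow p g) ++ h.
have exps_u : exps u = 0 by rewrite exps_cat exps_winv exps_wpow -Eh addNr.
pose w : word r.+1 := wpow [:: (ord0, false)] g ++ map (@shl r) u.
have [k Hk] : exists k : 'I_r.+1 -> int,
    seq_eq d (weval w (fun i => wpow h (k i))) (wpow h 1).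
  apply: VC; exists (gsol p); rewrite /w weval_cat weval_wpow weval_shl wpow1.
  by rewrite /weval /= /gsol unlift_none cats0; exact: se_cancel d [::] (wpow p g) h.
(* the exponent of h produced by w is g k_0: the part u contributes 0 *)
have sum_w : \sum_(a <- w) sgl a * k a.1 = g * k ord0.
  rewrite big_cat big_map /= (pair_exps u (fun j => k (lift ord0 j))) exps_u.
  rewrite [X in _ + X]big1 => [|j _]; last by rewrite mxE mul0r.
  rewrite addr0 pair_exps exps_wpow exps_letter (bigD1 ord0) //= big1 ?addr0.
    by rewrite !mxE eqxx /= mulr1.
  by move=> j /negbTE nj; rewrite !mxE eqxx nj mulr0 mul0r.
exists (k ord0); apply/se_nil.
have := se_trans (se_sym (weval_pow d w h k)) Hk; rewrite sum_w => Hgk.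
apply: se_trans (se_sym (wpow_add d h _ (-1))) _.
apply: se_trans (se_cat Hgk (se_refl d _)) _.
by apply: se_trans (wpow_add d h 1 (-1)) _; rewrite subrr; exact: se_refl.
Qed.

Lemma verbally_closed_unimodular r d (h : word r.+1) : ~ seq_eq d.+1 h [::] ->
  verbally_closed_cyclic d.+1 h -> unimodular (exps h).
Proof.
move=> h_neq1 VC; have [g [R uR Eh]] := smith_row (exps h).
have Eh' : exps h = g *: exps (vword (row 0 R)) by rewrite exps_vword.
have [m Hm] := verbally_closed_exponent VC Eh'.
have [g0|g_neq0] := eqVneq g 0.
  (* g = 0 would make h^-1 trivial *)
  case: h_neq1; apply/se_nil; move: Hm; rewrite g0 mul0r sub0r.
  have -> : wpow h (-1) = winv h by rewrite /wpow /= cats0.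
  by move/derived_inv; rewrite winvK.
(* comparing exponent sums in h^(g m - 1) = 1 gives g m = 1 *)
have /eqP : (g * m - 1) * g = 0.
  apply: (@scale_row_eq0 r _ R uR); rewrite -scalerA -Eh -exps_wpow.
  exact: (@cc_exps _ _ _ Hm).
rewrite mulf_eq0 (negbTE g_neq0) orbF subr_eq0 => /eqP gm1.
rewrite Eh (unimodular_scale_row _ uR); apply/unitrP; exists m.
by rewrite mulrC gm1.
Qed.

Theorem lemma5 (r d : nat) (h : word r) :
  (1 <= r)%N -> (1 <= d)%N -> ~ seq_eq d h [::] ->
  (verbally_closed_cyclic d h <-> retract_cyclic d h) /\
  (retract_cyclic d h <-> ab_primitive h).
Proof.
case: r h => [//|r] h _; case: d => [//|d] _ h_neq1.
have VC_U := verbally_closed_unimodular h_neq1.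
split; split.
- by move/VC_U; exact: unimodular_retract.
- exact: retract_verbally_closed.
- by move/retract_verbally_closed/VC_U; exact: unimodular_primitive.
- by move/primitive_unimodular; exact: unimodular_retract.
Qed.
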